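(* For every $\lambda\in P^+$ (notation as in the context) one has $$(\widetilde\lambda+2\widetilde\rho,\widetilde\lambda)=(\lambda+2\rho,\lambda)=(\overline\lambda+2\overline\rho,\overline\lambda).$$
   Context: Fix $m\in\mathbb Z_{\ge0}$ and a type $\mathfrak x\in\{\mathfrak a,\mathfrak b,\mathfrak b^\bullet,\mathfrak c,\mathfrak d\}$. Consider symbols $\Lambda_0$ and $\epsilon_j$ for $j\in\{-m,\dots,-1\}\cup\frac12\mathbb N$, and the symmetric bilinear form on their $\mathbb C$-span given by $(\Lambda_0,\Lambda_0)=0$, $(\epsilon_i,\epsilon_j)=(-1)^{2j}\delta_{ij}$, $(\Lambda_0,\epsilon_j)=-\delta_j$, where $\delta_j=1$ for $j>0$ and $\delta_j=0$ for $j<0$. Dominant weights: given a partition $\nu=(\nu_1,\nu_2,\dots)$, $d\in\mathbb C$ and $\lambda_{-m},\dots,\lambda_{-1}\in\mathbb C$ (in $\mathbb Z$ for type $\mathfrak b^\bullet$), put $\lambda=\sum_{i=-m}^{-1}\lambda_i\epsilon_i+\sum_{j\in\mathbb N}\nu_j\epsilon_j+d\Lambda_0$, $\overline\lambda=\sum_{i=-m}^{-1}\lambda_i\epsilon_i+\sum_{s\in\frac12+\mathbb Z_{\ge0}}\nu'_{s+1/2}\epsilon_s+d\Lambda_0$, $\widetilde\lambda=\sum_{i=-m}^{-1}\lambda_i\epsilon_i+\sum_{r\in\frac12\mathbb N}\theta(\nu)_r\epsilon_r+d\Lambda_0$, where $\nu'$ is the conjugate partition and $\theta(\nu)_{i-1/2}=\max\{\nu'_i-i+1,0\}$,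 $\theta(\nu)_i=\max\{\nu_i-i,0\}$ for $i\in\mathbb N$. $P^+$ is the set of all such $\lambda$. Let $\mathbf r=-1$ in type $\mathfrak a$, $-m-\frac12$ in types $\mathfrak b,\mathfrak b^\bullet$, $-m-1$ in type $\mathfrak c$, $-m$ in type $\mathfrak d$. For a weight $\mu=c\Lambda_0+\sum_j\mu_j\epsilon_j$ (finitely many nonzero $\mu_j$) define $(\mu+2\rho,\mu):=(\mu,\mu)+2\sum_j\mu_j\rho_j$, $(\mu+2\overline\rho,\mu):=(\mu,\mu)+2\sum_j\mu_j\overline\rho_j$, $(\mu+2\widetilde\rho,\mu):=(\mu,\mu)+2\sum_j\mu_j\widetilde\rho_j$, where for $j<0$: $\rho_j=\overline\rho_j=\widetilde\rho_j=\mathbf r-j$; for $j\in\mathbb N$: $\rho_j=\mathbf r+1-j$; for $j\in\frac12+\mathbb Z_{\ge0}$: $\overline\rho_j=\mathbf r+j+\frac12$; for $j\in\frac12\mathbb N$: $\widetilde\rho_j=\mathbf r+1$. *)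

From HB Require Import structures.
From mathcomp Require Import all_boot all_order all_algebra.
From mathcomp Require Import complex.
Set Implicit Arguments. Unset Strict Implicit. Unset Printing Implicit Defensive.
Import Order.TTheory GRing.Theory Num.Theory.
Local Open Scope ring_scope.

Inductive xtype := Ta | Tb | Tbb | Tc | Td.

Section Weights.
Variable R : rcfType.
Local Notation C := (R[i]).
Variable m : nat.

(* Indices: the negative index j = -(i+1) for i : 'I_m (so j ranges over
   -m..-1), and the positive half-integer index j = k/2 for k : nat, k >= 1.
   A weight  c Lambda_0 + sum_j mu_j eps_j  is given by c, the negative part
   wneg i = mu_{-(i+1)}, and the positive part wpos k = mu_{k/2}
   (wpos 0 is irrelevant). *)
Record weight := Weight { wd : C; wneg : 'I_m -> C; wpos : nat -> C }.

Definition half (k : nat) : C := k%:R / 2.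

Definition rr (x : xtype) : C :=
  match x with
  | Ta => -1
  | Tb | Tbb => - m%:R - 1 / 2
  | Tc => - m%:R - 1
  | Td => - m%:R
  end.

(* the sign (-1)^{2j} for j = k/2 *)
Definition sgn (k : nat) : C := (-1) ^+ k.

(* (mu, mu), computed over positive indices 1 <= k < K (K bounding the
   support of mu). Uses (Lambda0,Lambda0)=0, (eps_i,eps_j)=(-1)^{2j}delta_ij,
   (Lambda0, eps_j) = -delta_j. *)
Definition wform (K : nat) (mu : weight) : C :=
  \sum_(i < m) (wneg mu i) ^+ 2
  + \sum_(1 <= k < K) sgn k * (wpos mu k) ^+ 2
  - 2 * wd mu * \sum_(1 <= k < K) wpos mu k.

(* rho_j = r - j for j < 0, j = -(i+1) *)
Definition rho_neg (x : xtype) (i : 'I_m) : C := rr x + (i.+1)%:R.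
(* rho_j = r + 1 - j for j in N (k = 2j even); rho has no half-integer
   components. *)
Definition rho_pos (x : xtype) (k : nat) : C :=
  if odd k then 0 else rr x + 1 - half k.
(* rhobar_j = r + j + 1/2 for j in 1/2 + Z_{>=0} (k = 2j odd). *)
Definition rhobar_pos (x : xtype) (k : nat) : C :=
  if odd k then rr x + half k + 1 / 2 else 0.
Definition rhotil_pos (x : xtype) (k : nat) : C := rr x + 1.

(* (mu + 2 rho', mu) := (mu,mu) + 2 sum_j mu_j rho'_j *)
Definition wform_rho (x : xtype) (rp : xtype -> nat -> C) (K : nat)
    (mu : weight) : C :=
  wform K mu + 2 * (\sum_(i < m) wneg mu i * rho_neg x i
                    + \sum_(1 <= k < K) wpos mu k * rp x k).

(* Partitions nu = (nu_1, nu_2, ...) are represented by a nonincreasing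
   seq nat (followed by zeros). *)
Definition part_nth (nu : seq nat) (j : nat) : nat := nth 0 nu j.-1.
Definition conj_nth (nu : seq nat) (i : nat) : nat :=
  count (fun a => i <= a)%N nu.
(* theta(nu)_{i-1/2} = max(nu'_i - i + 1, 0), theta(nu)_i = max(nu_i - i, 0) *)
Definition theta_half (nu : seq nat) (i : nat) : nat := (conj_nth nu i + 1 - i)%N.
Definition theta_int (nu : seq nat) (i : nat) : nat := (part_nth nu i - i)%N.

Definition lam_pos (nu : seq nat) (k : nat) : C :=
  if odd k then 0 else (part_nth nu k./2)%:R.
Definition lambar_pos (nu : seq nat) (k : nat) : C :=
  if odd k then (conj_nth nu k.+1./2)%:R else 0.   (* s = k/2, s+1/2 = (k+1)/2 *)
Definition lamtil_pos (nu : seq nat) (k : nat) : C :=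
  if odd k then (theta_half nu k.+1./2)%:R else (theta_int nu k./2)%:R.

Definition lam_wt nu d (l : 'I_m -> C) := Weight d l (lam_pos nu).
Definition lambar_wt nu d (l : 'I_m -> C) := Weight d l (lambar_pos nu).
Definition lamtil_wt nu d (l : 'I_m -> C) := Weight d l (lamtil_pos nu).

End Weights.

(* Only the positive parts of the three weights differ.  With v i = nu_(i+1) and
   w c = nu'_(c+1) the row and column lengths of the Young diagram of nu, all the
   positive-part sums are sums over its cells (i, c), c < v i <-> i < w c, of simple
   weights:
     |nu| = sum v_i = sum w_c = sum theta(nu)   (cells right of / on-or-below the diagonal),
     sum v_i^2 + sum w_c^2 = sum 2c w_c + sum 2(i+1) v_i,
     sum (v_i - i - 1)_+^2 + sum 2(i+1) v_i = sum v_i^2 + sum (w_c - c)_+^2.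
   Each follows by exchanging the order of summation over the diagram and comparing
   the weights cell by cell. *)

From Pilot Require Import Defs.
From mathcomp Require Import all_boot all_order all_algebra.
From mathcomp Require Import complex.
From mathcomp Require Import zify ring.
Import Order.TTheory GRing.Theory Num.Theory.

Set Implicit Arguments.
Unset Strict Implicit.
Unset Printing Implicit Defensive.

Lemma sum_odd n : \sum_(u < n) (2 * u + 1) = n ^ 2.
Proof. by elim: n => [|n IHn]; rewrite ?big_ord0 // big_ord_recr /= IHn; lia. Qed.

Lemma sum_ord_const n a : \sum_(u < n) a = n * a.
Proof. by rewrite sum_nat_const card_ord. Qed.

Lemma sum_ord_shift n s (f : nat -> nat) :
  \sum_(c < n) (s <= c) * f (c - s) = \sum_(u < n - s) f u.
Proof.
elim: n => [|n IHn]; first by rewrite !big_ord0.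
rewrite big_ord_recr /= IHn; case: (leqP s n) => [le_sn | lt_ns] /=.
- by rewrite subSn // big_ord_recr mul1n.
- by rewrite mul0n addn0 (eqP (ltnW lt_ns)) (eqP lt_ns).
Qed.

Lemma sum_ord_ge n s : \sum_(c < n) (s <= c) = n - s.
Proof.
rewrite -[RHS]muln1 -sum_ord_const -(sum_ord_shift n s (fun=> 1)).
by apply: eq_bigr => c _; rewrite muln1.
Qed.

Lemma sum_ord_ge_odd n s :
  \sum_(c < n) (s <= c) * (2 * (c - s) + 1) = (n - s) ^ 2.
Proof. by rewrite (sum_ord_shift n s (fun u => 2 * u + 1)) sum_odd. Qed.

Lemma nth_leq_sumn s i : nth 0 s i <= sumn s.
Proof.
elim: s i => [|a s IHs] [|i] //=; first exact: leq_addr.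
exact: leq_trans (IHs i) (leq_addl _ _).
Qed.

Lemma ltn_nth_count s c i : sorted geq s ->
  (c < nth 0 s i) = (i < count (fun a => c < a) s).
Proof.
elim: s i => [|a s IHs] i /=; first by rewrite nth_nil.
move=> sorted_as; have sorted_s := path_sorted sorted_as.
have le_s_a : all (fun b => b <= a) s.
  apply: (order_path_min _ sorted_as) => p q r /= le_qp le_rq.
  exact: leq_trans le_rq le_qp.
case: (ltnP c a) => [lt_ca | le_ac].
  by case: i => [|i] //=; rewrite IHs.
have le_s_c : all (fun b => b <= c) s.
  by apply: sub_all le_s_a => b /= le_ba; exact: leq_trans le_ba le_ac.
have -> : count (fun b => c < b) s = 0.
  apply/eqP; rewrite -leqn0 leqNgt -has_count.
  by apply/hasPn => b /(allP le_s_c); rewrite -leqNgt.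
case: i => [|i] /=; first by rewrite ltnNge le_ac.
case: (ltnP i (size s)) => [lt_is | le_si]; last by rewrite nth_default.
by apply/negbTE; rewrite -leqNgt (allP le_s_c) ?mem_nth.
Qed.

Section ConjugateSequences.

Variables (L : nat) (v w : nat -> nat).
Hypotheses (v_le : forall i, v i <= L) (w_le : forall c, w c <= L).
Hypothesis v_w_conj : forall i c, (c < v i) = (i < w c).

Lemma exchange_diagram (g : nat -> nat -> nat) :
  \sum_(i < L) \sum_(c < v i) g i c = \sum_(c < L) \sum_(i < w c) g i c.
Proof.
have widen n (F : nat -> nat) : n <= L -> \sum_(c < n) F c = \sum_(c < L) (c < n) * F c.
  move=> le_nL; rewrite (big_ord_widen L F le_nL) big_mkcond.
  by apply: eq_bigr => c _; case: (c < n); rewrite ?mul1n.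
under eq_bigr => i _ do rewrite (widen _ (g i) (v_le i)).
under [RHS]eq_bigr => c _ do rewrite (widen _ (g^~ c) (w_le c)).
rewrite exchange_big; apply: eq_bigr => c _; apply: eq_bigr => i _.
by rewrite v_w_conj.
Qed.

Lemma sum_conj : \sum_(i < L) v i = \sum_(c < L) w c.
Proof.
have := exchange_diagram (fun _ _ => 1).
under eq_bigr => i _ do rewrite sum_ord_const muln1.
by under [RHS]eq_bigr => c _ do rewrite sum_ord_const muln1.
Qed.

Lemma sum_sqr_conj :
  \sum_(i < L) v i ^ 2 + \sum_(c < L) w c ^ 2
  = \sum_(c < L) 2 * c * w c + \sum_(i < L) 2 * i.+1 * v i.
Proof.
under eq_bigr => i _ do rewrite -sum_odd.
under [X in _ + X = _]eq_bigr => c _ do rewrite -sum_odd.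
under [X in _ = X + _]eq_bigr => c _ do rewrite mulnC -sum_ord_const.
under [X in _ = _ + X]eq_bigr => i _ do rewrite mulnC -sum_ord_const.
rewrite -(exchange_diagram (fun i c => 2 * i + 1)) -(exchange_diagram (fun i c => 2 * c)).
rewrite -!big_split; apply: eq_bigr => i _; rewrite -!big_split; apply: eq_bigr => c _ /=.
lia.
Qed.

Lemma sum_frobenius : \sum_(i < L) ((v i - i.+1) + (w i - i)) = \sum_(i < L) v i.
Proof.
rewrite big_split /=.
under eq_bigr => i _ do rewrite -sum_ord_ge.
under [X in _ + X = _]eq_bigr => c _ do rewrite -sum_ord_ge.
under [RHS]eq_bigr => i _ do rewrite -[v i]muln1 -sum_ord_const.
rewrite -(exchange_diagram (fun i c => c <= i)) -big_split; apply: eq_bigr => i _.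
rewrite -big_split; apply: eq_bigr => c _ /=.
by case: (ltnP i c).
Qed.

Lemma sum_sqr_frobenius :
  \sum_(i < L) (v i - i.+1) ^ 2 + \sum_(i < L) 2 * i.+1 * v i
  = \sum_(i < L) v i ^ 2 + \sum_(c < L) (w c - c) ^ 2.
Proof.
under eq_bigr => i _ do rewrite -sum_ord_ge_odd.
under [X in _ + X = _]eq_bigr => i _ do rewrite mulnC -sum_ord_const.
under [X in _ = X + _]eq_bigr => i _ do rewrite -sum_odd.
under [X in _ = _ + X]eq_bigr => c _ do rewrite -sum_ord_ge_odd.
rewrite -(exchange_diagram (fun i c => (c <= i) * (2 * (i - c) + 1))).
rewrite -!big_split; apply: eq_bigr => i _; rewrite -!big_split; apply: eq_bigr => c _ /=.
case: (ltnP i c) => /= ? ; lia.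
Qed.

End ConjugateSequences.

Local Open Scope ring_scope.

Lemma natr_sub_eq {V : pzRingType} (a b c d : nat) :
  (a + b = c + d)%N -> a%:R - d%:R = c%:R - b%:R :> V.
Proof.
by move=> abcd; rewrite -[a%:R](addrK b%:R) -natrD abcd natrD addrAC addrK.
Qed.

Lemma sum_pair {V : nmodType} {K L : nat} {f : nat -> V} :
  (K <= L.*2.+1)%N -> (forall k, (K <= k)%N -> f k = 0) ->
  \sum_(1 <= k < K) f k = \sum_(i < L) (f i.*2.+1 + f i.*2.+2).
Proof.
move=> le_KL f_vanish.
have -> : \sum_(1 <= k < K) f k = \sum_(1 <= k < L.*2.+1) f k.
  case: (leqP K 1) => [le_K1 | lt_1K].
    rewrite big_geq // big_nat big1 // => k /andP[le_1k _].
    exact/f_vanish/(leq_trans le_K1).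
  rewrite [RHS](big_cat_nat (ltnW lt_1K) le_KL) /= [X in _ = _ + X]big_nat.
  by rewrite [X in _ = _ + X]big1 ?addr0 // => k /andP[le_Kk _]; exact: f_vanish.
elim: L {le_KL} => [|L IHL]; first by rewrite big_ord0 big_geq.
by rewrite big_ord_recr /= -IHL doubleS big_nat_recr //= big_nat_recr //= addrA.
Qed.

Definition quad_pos {R : rcfType} (x : xtype) (rp : xtype -> nat -> R[i])
    (K : nat) (p : nat -> R[i]) : R[i] :=
  \sum_(1 <= k < K) (sgn R k * p k ^+ 2 + 2 * (p k * rp x k)).

Lemma wform_rhoE (R : rcfType) m x rp K d (l : 'I_m -> R[i]) p :
  wform_rho x rp K (Weight d l p)
  = \sum_(i < m) (l i ^+ 2 + 2 * (l i * rho_neg R x i)) + quad_pos x rp K p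
    - 2 * d * \sum_(1 <= k < K) p k.
Proof.
rewrite /wform_rho /wform /quad_pos /= !big_split /= -!mulr_sumr; ring.
Qed.

Section PositiveParts.

Variables (R : rcfType) (m : nat) (x : xtype) (nu : seq nat) (K L : nat).
Hypothesis le_KL : (K <= L.*2.+1)%N.
Hypothesis pos_vanish : forall k, (K <= k)%N ->
  [/\ lam_pos R nu k = 0, lambar_pos R nu k = 0 & lamtil_pos R nu k = 0].

(* Index i < L pairs the half-integer i + 1/2 (k = 2i+1) with the integer i + 1
   (k = 2i+2); accordingly v i = nu_(i+1) and w i = nu'_(i+1). *)
Local Notation v i := (nth 0%N nu i).
Local Notation w c := (count (fun a => c < a)%N nu).
Local Notation r := (rr R m x).

Lemma half_even (i : nat) : Defs.half R i.*2 = i%:R.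
Proof. by rewrite /Defs.half -muln2 natrM mulfK // pnatr_eq0. Qed.

Lemma half_odd (i : nat) : Defs.half R i.*2.+1 + 1 / 2 = i.+1%:R.
Proof. by rewrite /Defs.half -mulrDl natr1 -doubleS; exact: half_even. Qed.

Lemma sgn_even (i : nat) : sgn R i.*2 = 1.
Proof. by rewrite /sgn -signr_odd odd_double. Qed.

Lemma sgn_odd (i : nat) : sgn R i.*2.+1 = -1.
Proof. by rewrite /sgn -signr_odd /= odd_double. Qed.

Lemma sum_lam_pos : \sum_(1 <= k < K) lam_pos R nu k = (\sum_(i < L) v i)%:R.
Proof.
rewrite (sum_pair le_KL) => [|k /pos_vanish[] //]; rewrite natr_sum.
by apply: eq_bigr => i _; rewrite /lam_pos /= odd_double /= doubleK add0r.
Qed.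

Lemma sum_lambar_pos : \sum_(1 <= k < K) lambar_pos R nu k = (\sum_(i < L) w i)%:R.
Proof.
rewrite (sum_pair le_KL) => [|k /pos_vanish[] //]; rewrite natr_sum.
by apply: eq_bigr => i _; rewrite /lambar_pos /= odd_double /= doubleK addr0.
Qed.

Lemma sum_lamtil_pos :
  \sum_(1 <= k < K) lamtil_pos R nu k = (\sum_(i < L) ((v i - i.+1) + (w i - i)))%:R.
Proof.
rewrite (sum_pair le_KL) => [|k /pos_vanish[] //]; rewrite natr_sum.
apply: eq_bigr => i _; rewrite /lamtil_pos /= odd_double /= doubleK.
by rewrite /theta_half /theta_int /conj_nth addn1 subSS natrD addrC.
Qed.

Lemma quad_lam_pos :
  quad_pos x (rho_pos R m) K (lam_pos R nu)
  = 2 * (r + 1) * (\sum_(i < L) v i)%:R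
    + ((\sum_(i < L) v i ^ 2)%:R - (\sum_(i < L) 2 * i.+1 * v i)%:R).
Proof.
rewrite /quad_pos (sum_pair le_KL) => [|k /pos_vanish[-> _ _]]; last first.
  by rewrite expr2 !(mul0r, mulr0) addr0.
rewrite !natr_sum mulr_sumr -sumrB -big_split; apply: eq_bigr => i _ /=.
rewrite /lam_pos /rho_pos /= odd_double /= doubleK -doubleS half_even sgn_even.
rewrite natrX !natrM; ring.
Qed.

Lemma quad_lambar_pos :
  quad_pos x (rhobar_pos R m) K (lambar_pos R nu)
  = 2 * (r + 1) * (\sum_(i < L) w i)%:R
    + ((\sum_(i < L) 2 * i * w i)%:R - (\sum_(i < L) w i ^ 2)%:R).
Proof.
rewrite /quad_pos (sum_pair le_KL) => [|k /pos_vanish[_ -> _]]; last first.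
  by rewrite expr2 !(mul0r, mulr0) addr0.
rewrite !natr_sum mulr_sumr -sumrB -big_split; apply: eq_bigr => i _ /=.
rewrite /lambar_pos /rhobar_pos /conj_nth /= odd_double /= doubleK.
rewrite -[r + _ + _]addrA half_odd sgn_odd.
rewrite natrX !natrM; ring.
Qed.

Lemma quad_lamtil_pos :
  quad_pos x (rhotil_pos R m) K (lamtil_pos R nu)
  = 2 * (r + 1) * (\sum_(i < L) ((v i - i.+1) + (w i - i)))%:R
    + ((\sum_(i < L) (v i - i.+1) ^ 2)%:R - (\sum_(i < L) (w i - i) ^ 2)%:R).
Proof.
rewrite /quad_pos (sum_pair le_KL) => [|k /pos_vanish[_ _ ->]]; last first.
  by rewrite expr2 !(mul0r, mulr0) addr0.
rewrite !natr_sum mulr_sumr -sumrB -big_split; apply: eq_bigr => i _ /=.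
rewrite /lamtil_pos /rhotil_pos /= odd_double /= doubleK sgn_odd -doubleS sgn_even.
rewrite /theta_half /theta_int /conj_nth addn1 subSS !natrX natrD; ring.
Qed.

End PositiveParts.

Theorem proposition3p3 (R : rcfType) (m : nat) (x : xtype)
    (nu : seq nat) (Hnu : sorted geq nu)
    (d : R[i]) (l : 'I_m -> R[i])
    (Hbb : x = Tbb -> forall j : 'I_m, exists z : int, l j = z%:~R)
    (K : nat)
    (HK : forall k, (K <= k)%N ->
       [/\ lam_pos R nu k = 0, lambar_pos R nu k = 0 & lamtil_pos R nu k = 0]) :
  wform_rho x (@rhotil_pos R m) K (lamtil_wt nu d l)
    = wform_rho x (@rho_pos R m) K (lam_wt nu d l)
  /\ wform_rho x (@rho_pos R m) K (lam_wt nu d l)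
    = wform_rho x (@rhobar_pos R m) K (lambar_wt nu d l).
Proof.
pose L := (K + size nu + sumn nu)%N.
have le_KL : (K <= L.*2.+1)%N by rewrite -addnn /L; lia.
have v_le i : (nth 0 nu i <= L)%N.
  by rewrite (leq_trans (nth_leq_sumn nu i)) // leq_addl.
have w_le c : (count (fun a => c < a)%N nu <= L)%N.
  by rewrite (leq_trans (count_size _ _)) // /L; lia.
have v_w_conj i c := ltn_nth_count c i Hnu.
rewrite /lam_wt /lambar_wt /lamtil_wt !wform_rhoE.
rewrite (quad_lam_pos m x le_KL HK) (quad_lambar_pos m x le_KL HK).
rewrite (quad_lamtil_pos m x le_KL HK) (sum_lam_pos le_KL HK).
rewrite (sum_lambar_pos le_KL HK) (sum_lamtil_pos le_KL HK).
rewrite (sum_frobenius v_le w_le v_w_conj) -(sum_conj v_le w_le v_w_conj).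
rewrite (natr_sub_eq (sum_sqr_frobenius v_le w_le v_w_conj)).
by rewrite (natr_sub_eq (sum_sqr_conj v_le w_le v_w_conj)).
Qed.
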